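(* Let $A\in\mathbb{R}^{n\times n}$ and $b\in\mathbb{R}^n$, and consider the generalized Newton method (GNM) for the absolute value equation $Ax-|x|-b=0$: starting from an initial $x^0\in\mathbb{R}^n$, compute $x^{k+1}=[A-\mathcal{D}(x^k)]^{-1}b$ for $k=0,1,2,\dots$. Suppose that $A$ satisfies either (a) $A-I$ is an $M$-matrix, or (b) $\mathcal{N}(A^\top-I)=\mathrm{span}(v)$ for some vector $v>0$, and $A-I+D$ is an $M$-matrix for every diagonal matrix $D=\mathrm{diag}(d)$ with $d\ge 0$ and $d\neq 0$. If $A$ satisfies (b), assume in addition that $\mathcal{D}(x^0)\neq I$ and $v^\top b<0$. Then GNM converges to an exact solution of $Ax-|x|-b=0$ in at most $2n+2$ iterations.
   Context: For $x\in\mathbb{R}^n$, $|x|=(|x_1|,\dots,|x_n|)^\top$, and $\mathcal{D}(x)=\mathrm{diag}(\mathrm{sign}(x))$, where $\mathrm{sign}(x)$ is the vector whose $i$th component is $-1$, $0$, or $1$ according as $x_i<0$, $x_i=0$, or $x_i>0$. A matrix is a $Z$-matrix if all its off-diagonal entries are $\le 0$; a $Z$-matrix $A$ is an $M$-matrix if $A$ is nonsingular and $A^{-1}\ge 0$ (entrywise). Vector and matrix inequalities are entrywise; $v>0$ means all entries of $v$ are strictly positive. $\mathcal{N}(X)$ denotes the null space of $X$. *)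

From mathcomp Require Import all_boot all_order all_algebra.
Set Implicit Arguments. Unset Strict Implicit. Unset Printing Implicit Defensive.
Import Order.TTheory GRing.Theory Num.Theory.
Local Open Scope ring_scope.

Definition absv (R : realFieldType) (n : nat) (x : 'cV[R]_n) : 'cV[R]_n :=
  \col_i `|x i 0|.

Definition Dsign (R : realFieldType) (n : nat) (x : 'cV[R]_n) : 'M[R]_n :=
  diag_mx (\row_i Num.sg (x i 0)).

Definition Zmatrix (R : realFieldType) (n : nat) (A : 'M[R]_n) : Prop :=
  forall i j : 'I_n, i != j -> A i j <= 0.

Definition Mmatrix (R : realFieldType) (n : nat) (A : 'M[R]_n) : Prop :=
  [/\ Zmatrix A, A \in unitmx & forall i j, 0 <= invmx A i j].

Fixpoint gnm (R : realFieldType) (n : nat) (A : 'M[R]_n) (b x0 : 'cV[R]_n)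
  (k : nat) : 'cV[R]_n :=
  match k with
  | 0 => x0
  | k'.+1 => invmx (A - Dsign (gnm A b x0 k')) *m b
  end.

Definition AVE_sol (R : realFieldType) (n : nat) (A : 'M[R]_n) (b x : 'cV[R]_n)
  : Prop := A *m x - absv x - b = 0.

(* Each Newton matrix A - D(x^k) is an M-matrix: in case (a) it is A - I plus a
   nonnegative diagonal, in case (b) it is A - I plus a nonzero nonnegative
   diagonal because no iterate is entrywise positive (otherwise v^T b >= 0).
   Monotonicity of M-matrices then makes the iterates x^1 <= x^2 <= ...
   nondecreasing, and an iterate whose sign pattern equals that of its
   predecessor already solves the equation.  So until the method stops, the sum
   of the signs of x^k, which lies in [-n, n], grows by at least one per step. *)

From mathcomp Require Import all_boot all_order all_algebra lra zify.
Set Implicit Arguments. Unset Strict Implicit. Unset Printing Implicit Defensive.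
Import Order.TTheory GRing.Theory Num.Theory.
Local Open Scope ring_scope.

Lemma bounded_potential_halts (R : realDomainType) (Q : pred nat)
    (g : nat -> R) (m : nat) :
  (forall k, `|g k| <= m%:R) -> (forall k, ~~ Q k.+1 -> g k + 1 <= g k.+1) ->
  exists2 k, (k <= 2 * m + 1)%N & Q k.
Proof.
move=> g_bound g_incr.
have [/existsP[k Qk]|/existsPn noQ] := boolP [exists k : 'I_(2 * m + 2), Q k].
  by exists k => //; have := ltn_ord k; lia.
have grow j : (j <= 2 * m + 1)%N -> g 0%N + j%:R <= g j.
  elim: j => [|j IH] le_j; first by rewrite addr0.
  have lt_j : (j.+1 < 2 * m + 2)%N by lia.
  have := g_incr j (noQ (Ordinal lt_j)); have := IH (ltnW le_j).
  by rewrite -natr1; lra.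
have := grow _ (leqnn _); rewrite natrD natrM.
move: (g_bound 0%N) (g_bound (2 * m + 1)%N) => /ler_normlP[? ?] /ler_normlP[? ?].
lra.
Qed.

Section MMatrices.
Variables (R : realFieldType) (n : nat).
Implicit Types (M : 'M[R]_n) (u w x : 'cV[R]_n).

Lemma Zmatrix_mul_le_diag M w i :
  Zmatrix M -> (forall j, 0 <= w j 0) -> (M *m w) i 0 <= M i i * w i 0.
Proof.
move=> ZM w_ge0; rewrite mxE (bigD1 i) //= gerDl.
by rewrite sumr_le0 // => j ji; rewrite mulr_le0_ge0 // ZM // eq_sym.
Qed.

Lemma Zmatrix_semipositive_gt0 M u :
  Zmatrix M -> (forall i, 0 <= u i 0) -> (forall i, 0 < (M *m u) i 0) ->
  forall i, 0 < u i 0.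
Proof.
move=> ZM u_ge0 Mu_gt0 i; rewrite lt_def u_ge0 andbT; apply/eqP => ui0.
have := lt_le_trans (Mu_gt0 i) (Zmatrix_mul_le_diag i ZM u_ge0).
by rewrite ui0 mulr0 ltxx.
Qed.

(* The minimum of x_j / u_j is attained at some m; if it were negative, then
   x - t u >= 0 vanishes at m, which forces (M x)_m < 0. *)
Lemma Zmatrix_semipositive_monotone M u :
  Zmatrix M -> (forall i, 0 < u i 0) -> (forall i, 0 < (M *m u) i 0) ->
  forall x, (forall i, 0 <= (M *m x) i 0) -> forall i, 0 <= x i 0.
Proof.
move=> ZM u_gt0 Mu_gt0 x Mx_ge0 i; rewrite leNgt; apply/negP => xi_lt0.
pose F j := x j 0 / u j 0.
have [m _ F_min] := @arg_minP _ R _ i xpredT F isT.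
set t := F m in F_min.
have t_lt0 : t < 0.
  by apply: le_lt_trans (F_min i isT) _; rewrite pmulr_llt0 ?invr_gt0.
pose w := x - t *: u.
have w_ge0 j : 0 <= w j 0 by rewrite !mxE subr_ge0 -ler_pdivlMr ?F_min.
have wm0 : w m 0 = 0 by rewrite !mxE /t /F divfK ?subrr // gt_eqF.
have Mw_le0 : (M *m w) m 0 <= 0.
  by have := Zmatrix_mul_le_diag m ZM w_ge0; rewrite wm0 mulr0.
have Mx_split : (M *m x) m 0 = t * (M *m u) m 0 + (M *m w) m 0.
  rewrite mulmxBr -scalemxAr; set Mx := M *m x; set Mu := M *m u.
  by rewrite !mxE [RHS]addrC subrK.
have tMu_lt0 : t * (M *m u) m 0 < 0 by rewrite nmulr_rlt0.
by have := Mx_ge0 m; rewrite Mx_split; lra.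
Qed.

Lemma Zmatrix_semipositive_Mmatrix M u :
  Zmatrix M -> (forall i, 0 <= u i 0) -> (forall i, 0 < (M *m u) i 0) ->
  Mmatrix M.
Proof.
move=> ZM u_ge0 Mu_gt0.
have mono := Zmatrix_semipositive_monotone ZM
  (Zmatrix_semipositive_gt0 ZM u_ge0 Mu_gt0) Mu_gt0.
have M_unit : M \in unitmx.
  rewrite -unitmx_tr -row_free_unit; apply: inj_row_free => v vMT0.
  have ker_ge0 (z : 'cV[R]_n) : M *m z = 0 -> forall i, 0 <= z i 0.
    by move=> Mz0; apply: mono => j; rewrite Mz0 mxE.
  have Mv0 : M *m v^T = 0 by rewrite -[M]trmxK -trmx_mul vMT0 trmx0.
  have MNv0 : M *m (- v^T) = 0 by rewrite mulmxN Mv0 oppr0.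
  apply/rowP => i; apply/le_anti; move: (ker_ge0 _ Mv0 i) (ker_ge0 _ MNv0 i).
  by rewrite !mxE oppr_ge0 => -> ->.
split=> // i j; have -> : invmx M i j = col j (invmx M) i 0 by rewrite mxE.
apply: mono => k; rewrite colE mulKVmx // mxE.
by case: (_ == _) (_ == _) => [] [].
Qed.

Lemma Mmatrix_monotone M x :
  Mmatrix M -> (forall i, 0 <= (M *m x) i 0) -> forall i, 0 <= x i 0.
Proof.
case=> _ M_unit inv_ge0 Mx_ge0 i; rewrite -(mulKmx M_unit x) mxE.
by rewrite sumr_ge0 // => j _; rewrite mulr_ge0.
Qed.

Lemma Mmatrix_add_diag M (d : 'rV[R]_n) :
  Mmatrix M -> (forall i, 0 <= d 0 i) -> Mmatrix (M + diag_mx d).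
Proof.
move=> MM d_ge0; have [ZM M_unit _] := MM.
pose u : 'cV[R]_n := invmx M *m const_mx 1.
have u_ge0 : forall i, 0 <= u i 0.
  by apply: (Mmatrix_monotone MM) => i; rewrite mulKVmx // mxE.
apply: (Zmatrix_semipositive_Mmatrix (u := u)) => // [i j ij|i].
  by rewrite !mxE (negbTE ij) mulr0n addr0 ZM.
rewrite mulmxDl mulKVmx // mul_diag_mx [X in 0 < X]mxE mxE [_ i 0]mxE.
by rewrite ltr_pwDl // mulr_ge0.
Qed.

End MMatrices.

Section Signs.
Variables (R : realFieldType) (n : nat).
Implicit Types (a c : R) (x y : 'cV[R]_n).

Lemma ler_sgD a c : a <= c -> Num.sg a + (Num.sg a != Num.sg c)%:R <= Num.sg c.
Proof.
move=> le_ac; case: eqP => [<-|neq]; first by rewrite /= addr0.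
rewrite /= mulr1n; case: sgrP neq => ha; case: sgrP => hc neq;
  try by case: neq.
all: lra.
Qed.

Lemma sgr_mul_le_norm a c : Num.sg a * c <= `|c|.
Proof.
case: sgrP => _; rewrite ?mul0r ?mul1r ?mulN1r ?normr_ge0 //.
  exact: ler_norm.
by rewrite -normrN; apply: ler_norm.
Qed.

Definition sg_gap x : 'rV[R]_n := \row_i (1 - Num.sg (x i 0)).

Lemma sg_gap_ge0 x i : 0 <= sg_gap x 0 i.
Proof. by rewrite mxE subr_ge0; case: sgrP => _; lra. Qed.

Lemma Dsign_sg_gap x : Dsign x = 1%:M - diag_mx (sg_gap x).
Proof.
by apply/matrixP => i j; rewrite !mxE; case: eqP => _; rewrite ?mulr1n ?mulr0n; lra.
Qed.

Lemma Dsign_mulE x y i : (Dsign x *m y) i 0 = Num.sg (x i 0) * y i 0.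
Proof. by rewrite mul_diag_mx !mxE. Qed.

Lemma Dsign_mul_self x : Dsign x *m x = absv x.
Proof. by apply/colP => i; rewrite Dsign_mulE mxE -normrEsg. Qed.

Lemma Dsign_eq1_gt0 x : Dsign x = 1%:M -> forall i, 0 < x i 0.
Proof.
move=> D1 i; move/matrixP/(_ i i): D1.
by rewrite !mxE eqxx !mulr1n => /eqP; rewrite sgr_cp0.
Qed.

Definition sgsum x : R := \sum_i Num.sg (x i 0).

Lemma sgsum_norm_le x : `|sgsum x| <= n%:R.
Proof.
apply: le_trans (ler_norm_sum _ _ _) _.
rewrite -[n in n%:R]card_ord -sumr_const; apply: ler_sum => i _.
by rewrite normr_sg; case: (_ != 0).
Qed.

Lemma sgsum_lt x y i :
  (forall j, x j 0 <= y j 0) -> Num.sg (x i 0) != Num.sg (y i 0) ->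
  sgsum x + 1 <= sgsum y.
Proof.
move=> le_xy neq_i.
have : sgsum x + \sum_j (Num.sg (x j 0) != Num.sg (y j 0))%:R <= sgsum y.
  by rewrite -big_split; apply: ler_sum => j _; apply: ler_sgD.
apply: le_trans; rewrite lerD2l (bigD1 i) //= neq_i lerDl.
by rewrite sumr_ge0.
Qed.

End Signs.

Section NewtonStep.
Variables (R : realFieldType) (n : nat) (A : 'M[R]_n) (b : 'cV[R]_n).
Implicit Types (v x y z : 'cV[R]_n).

Lemma subr_Dsign y : A - Dsign y = A - 1%:M + diag_mx (sg_gap y).
Proof. by rewrite Dsign_sg_gap opprB addrCA addrC. Qed.

Lemma Mmatrix_sub_Dsign y : Mmatrix (A - 1%:M) -> Mmatrix (A - Dsign y).
Proof.
by move=> MA; rewrite subr_Dsign; apply: Mmatrix_add_diag => // i; apply: sg_gap_ge0.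
Qed.

Lemma Mmatrix_sub_Dsign_neq1 y :
  (forall d : 'rV[R]_n, (forall i, 0 <= d 0 i) -> d != 0 ->
     Mmatrix (A - 1%:M + diag_mx d)) ->
  Dsign y != 1%:M -> Mmatrix (A - Dsign y).
Proof.
move=> MAd Dy_neq1; rewrite subr_Dsign; apply: MAd => [i|]; first exact: sg_gap_ge0.
by apply: contra Dy_neq1 => /eqP gap0; rewrite Dsign_sg_gap gap0 raddf0 subr0.
Qed.

Lemma AVE_sol_of_sg_eq y x :
  (A - Dsign y) *m x = b -> (forall i, Num.sg (x i 0) = Num.sg (y i 0)) ->
  AVE_sol A b x.
Proof.
move=> Ax_b sg_xy; have Dxy : Dsign x = Dsign y.
  by congr diag_mx; apply/rowP => i; rewrite !mxE sg_xy.
by rewrite /AVE_sol -Dsign_mul_self -Ax_b Dxy mulmxBl subrr.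
Qed.

Lemma Newton_step_le y x z :
  (A - Dsign y) *m x = b -> Mmatrix (A - Dsign x) -> (A - Dsign x) *m z = b ->
  forall i, x i 0 <= z i 0.
Proof.
move=> Ax_b MAx Az_b i; rewrite -subr_ge0.
have -> : z i 0 - x i 0 = (z - x) i 0 by rewrite !mxE.
apply: (Mmatrix_monotone MAx) => j.
have -> : (A - Dsign x) *m (z - x) = absv x - Dsign y *m x.
  rewrite mulmxBr Az_b -{1}Ax_b -mulmxBl opprB addrC addrA subrK.
  by rewrite mulmxBl Dsign_mul_self.
move: (Dsign_mulE y x j); rewrite !mxE => ->; rewrite subr_ge0.
exact: sgr_mul_le_norm.
Qed.

(* A positive left fixed vector v of A pairs b = (A - D(y)) x with v into
   v^T (I - D(y)) x, which is >= 0 as soon as x > 0. *)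
Lemma Newton_step_Dsign_neq1 v y x :
  v^T *m A = v^T -> (forall i, 0 < v i 0) -> (v^T *m b) 0 0 < 0 ->
  (A - Dsign y) *m x = b -> Dsign x != 1%:M.
Proof.
move=> vA v_gt0 vb_lt0 Ax_b; apply/eqP => /Dsign_eq1_gt0 x_gt0.
have vb : (v^T *m b) 0 0 = \sum_i v i 0 * (x i 0 - Num.sg (y i 0) * x i 0).
  rewrite -Ax_b mulmxA mulmxBr vA -{1}[v^T]mulmx1 -mulmxBr -mulmxA.
  rewrite mulmxBl mul1mx mxE; apply: eq_bigr => i _.
  by move: (Dsign_mulE y x i); rewrite !mxE => ->.
move: vb_lt0; rewrite vb ltNge => /negP; apply; apply: sumr_ge0 => i _.
rewrite mulr_ge0 ?(ltW (v_gt0 i)) // subr_ge0.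
by have := sgr_mul_le_norm (y i 0) (x i 0); rewrite gtr0_norm.
Qed.

Lemma gnm_converges x0 :
  (forall k, Mmatrix (A - Dsign (gnm A b x0 k))) ->
  exists k, [/\ (k <= 2 * n + 2)%N,
    (forall j, (j < k)%N -> A - Dsign (gnm A b x0 j) \in unitmx)
    & AVE_sol A b (gnm A b x0 k)].
Proof.
move=> MA; set x := gnm A b x0.
have xS k : (A - Dsign (x k)) *m x k.+1 = b by rewrite /= mulKVmx //; case: (MA k).
pose solved k := A *m x k.+1 - absv (x k.+1) - b == 0.
have [k le_k /eqP sol_k] : exists2 k, (k <= 2 * n + 1)%N & solved k.
  apply: (bounded_potential_halts (g := fun k => sgsum (x k.+1))) => k.
    exact: sgsum_norm_le.
  move=> /eqP unsolved.
  have [/existsP[i sg_neq]|/existsPn sg_eq] :=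
    boolP [exists i, Num.sg (x k.+1 i 0) != Num.sg (x k.+2 i 0)].
    exact: sgsum_lt (Newton_step_le (xS k) (MA k.+1) (xS k.+1)) sg_neq.
  case: unsolved; apply: AVE_sol_of_sg_eq (xS k.+1) _ => i.
  by apply/esym/eqP; rewrite -[_ == _]negbK sg_eq.
exists k.+1; split => // [|j _]; first lia.
by case: (MA j).
Qed.

End NewtonStep.

Theorem theorem3p1 (R : realFieldType) (n : nat) (A : 'M[R]_n) (b x0 : 'cV[R]_n) :
  (Mmatrix (A - 1%:M)
   \/
   (exists v : 'cV[R]_n,
      [/\ (forall w : 'cV[R]_n, (A^T - 1%:M) *m w = 0 <-> exists c : R, w = c *: v),
          (forall i, 0 < v i 0),
          (forall d : 'rV[R]_n, (forall i, 0 <= d 0 i) -> d != 0 ->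
              Mmatrix (A - 1%:M + diag_mx d)),
          Dsign x0 != 1%:M
        & (v^T *m b) 0 0 < 0])) ->
  exists k : nat, [/\ (k <= 2 * n + 2)%N,
    (forall j : nat, (j < k)%N -> A - Dsign (gnm A b x0 j) \in unitmx)
    & AVE_sol A b (gnm A b x0 k)].
Proof.
move=> hyp; apply: gnm_converges.
case: hyp => [MA k | [v [ker_v v_gt0 MAd x0_neq1 vb_lt0]]].
  exact: Mmatrix_sub_Dsign.
have vA : v^T *m A = v^T.
  have /ker_v/eqP : exists c, v = c *: v by exists 1; rewrite scale1r.
  by rewrite mulmxBl mul1mx subr_eq0 => /eqP ATv; rewrite -[A]trmxK -trmx_mul ATv.
suff neq1 k : Dsign (gnm A b x0 k) != 1%:M.
  by move=> k; apply: Mmatrix_sub_Dsign_neq1.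
elim: k => [|k IH] //=.
apply: (Newton_step_Dsign_neq1 (y := gnm A b x0 k) vA v_gt0 vb_lt0).
by rewrite mulKVmx //; case: (Mmatrix_sub_Dsign_neq1 MAd IH).
Qed.
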